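(* Suppose that (i) $K:\mathbb R^p\rightrightarrows\mathbb R^n$ is lower semicontinuous, and (ii) $f:\mathbb R^p\times\mathbb R^n\times\mathbb R^n\to\mathbb R^m$ is $C$-u.s.c. (at every point). Then the function $\nu:\mathbb R^p\times\mathbb R^n\to[0,+\infty]$, $\nu(\xi,x)=\sup_{z\in K(\xi)}\operatorname{dist}(f(\xi,x,z),C)$, is lower semicontinuous on $\mathbb R^p\times\mathbb R^n$.
   Context: $C\subset\mathbb R^m$ is a nontrivial closed, convex, pointed cone. $K:\mathbb R^p\rightrightarrows\mathbb R^n$ is a set-valued mapping with closed graph and $K(\xi)\neq\emptyset$ for every $\xi\in\mathbb R^p$ (standing assumption). A mapping $g:X\to Y$ between Euclidean spaces is $C$-u.s.c. at $x_0$ if for every neighbourhood $V$ of $g(x_0)$ there is a neighbourhood $U$ of $x_0$ with $g(x)\in V-C$ for all $x\in U$; it is $C$-u.s.c. if this holds at every point. $\operatorname{dist}(y,C)=\inf_{c\in C}\|y-c\|$ (Euclidean norm). *)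

(* R^k is modelled as 'rV[R]_k (row vectors) with its
   canonical (product) topology, which is the Euclidean topology. *)
From HB Require Import structures.
From mathcomp Require Import all_boot all_order all_algebra.
From mathcomp Require Import all_classical all_reals all_analysis.
Set Implicit Arguments. Unset Strict Implicit. Unset Printing Implicit Defensive.
Import Order.TTheory GRing.Theory Num.Theory.
Import numFieldNormedType.Exports.
Local Open Scope classical_set_scope.
Local Open Scope ring_scope.

Definition enorm {R : realType} {k : nat} (v : 'rV[R]_k) : R :=
  Num.sqrt (\sum_(i < k) v ord0 i ^+ 2).

Definition edist {R : realType} {k : nat} (y : 'rV[R]_k) (C : set 'rV[R]_k) : R :=
  inf [set enorm (y - c) | c in C].

Definition nontrivial_closed_convex_pointed_cone {R : realType} {k : nat}
  (C : set 'rV[R]_k) : Prop :=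
  C 0 /\
  (forall (t : R) c, 0 <= t -> C c -> C (t *: c)) /\
  (forall c d, C c -> C d -> C (c + d)) /\
  closed C /\
  (forall c, C c -> C (- c) -> c = 0) /\
  C <> [set 0].

Definition C_usc_at {R : realType} {k : nat} {X : topologicalType}
  (C : set 'rV[R]_k) (g : X -> 'rV[R]_k) (x0 : X) : Prop :=
  forall V, nbhs (g x0) V ->
    exists2 U, nbhs x0 U &
      forall x, U x -> exists2 v, V v & exists2 c, C c & g x = v - c.

Definition C_usc {R : realType} {k : nat} {X : topologicalType}
  (C : set 'rV[R]_k) (g : X -> 'rV[R]_k) : Prop :=
  forall x0, C_usc_at C g x0.

Definition setvalued_lsc {X Y : topologicalType} (K : X -> set Y) : Prop :=
  forall x0 (V : set Y), open V -> K x0 `&` V !=set0 ->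
    exists2 U, nbhs x0 U & forall x, U x -> K x `&` V !=set0.

Definition graph {X Y : Type} (K : X -> set Y) : set (X * Y) :=
  [set pq | K pq.1 pq.2].

Definition nu {R : realType} {p n m : nat}
  (K : 'rV[R]_p -> set 'rV[R]_n)
  (f : 'rV[R]_p * 'rV[R]_n * 'rV[R]_n -> 'rV[R]_m) (C : set 'rV[R]_m)
  (q : 'rV[R]_p * 'rV[R]_n) : \bar R :=
  ereal_sup [set (edist (f (q.1, q.2, z)) C)%:E | z in K q.1].

From Pilot Require Import Defs.
From HB Require Import structures.
From mathcomp Require Import all_boot all_order all_algebra.
From mathcomp Require Import all_classical all_reals all_analysis.
From mathcomp Require Import ring lra zify.
Import numFieldNormedType.Exports.
Import Order.TTheory GRing.Theory Num.Theory.
Local Open Scope classical_set_scope.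
Local Open Scope ring_scope.

(* The distance to C is lower semicontinuous along a C-u.s.c. map: for x near
   x0, [f x = v - c] with [v] close to [f x0] and [c] in C; since [C + C <= C],
   [v - c] is no closer to C than [v], which is not much closer than [f x0].
   Lower semicontinuity of K then lets a near-optimal [z0] in [K xi0] be
   tracked by some [z] in [K xi] for xi near xi0, so the supremum defining
   nu cannot drop suddenly. *)

Section euclidean_norm.
Context {R : realType} {k : nat}.

Lemma cauchy_schwarz_sum (a b : 'I_k -> R) :
  (\sum_i a i * b i) ^+ 2 <= (\sum_i a i ^+ 2) * (\sum_i b i ^+ 2).
Proof.
set A := \sum_i a i ^+ 2; set B := \sum_i b i ^+ 2; set S := \sum_i a i * b i.
have quadratic_ge0 t : 0 <= t ^+ 2 * A + (2 * t) * S + B.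
  have -> : t ^+ 2 * A + (2 * t) * S + B = \sum_i (t * a i + b i) ^+ 2.
    rewrite /A /B /S !mulr_sumr -!big_split /=; apply: eq_bigr => i _; ring.
  by apply: sumr_ge0 => i _; exact: sqr_ge0.
have A0 : 0 <= A by apply: sumr_ge0 => i _; exact: sqr_ge0.
have [Az|Ap] := eqVneq A 0.
  have a0 i : a i = 0.
    have := psumr_eq0P (P := xpredT) (F := fun i => a i ^+ 2)
      (fun i _ => sqr_ge0 (a i)) Az (i := i) isT.
    by move/eqP; rewrite sqrf_eq0 => /eqP.
  have -> : S = 0 by rewrite /S big1 // => i _; rewrite a0 mul0r.
  by rewrite expr0n /= Az mul0r.
(* the discriminant, read off at the minimiser t = - S / A *)
have := quadratic_ge0 (- S / A).
have -> : (- S / A) ^+ 2 * A + (2 * (- S / A)) * S + B = (A * B - S ^+ 2) / A.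
  by field.
by rewrite pmulr_lge0 ?subr_ge0 // invr_gt0 lt_neqAle eq_sym Ap A0.
Qed.

Lemma enorm_ge0 (v : 'rV[R]_k) : 0 <= enorm v.
Proof. exact: sqrtr_ge0. Qed.

Lemma enormD (u w : 'rV[R]_k) : enorm (u + w) <= enorm u + enorm w.
Proof.
rewrite /enorm.
set A := \sum_i u ord0 i ^+ 2; set B := \sum_i w ord0 i ^+ 2.
set S := \sum_i u ord0 i * w ord0 i.
have A0 : 0 <= A by apply: sumr_ge0 => i _; exact: sqr_ge0.
have B0 : 0 <= B by apply: sumr_ge0 => i _; exact: sqr_ge0.
have -> : \sum_i (u + w) ord0 i ^+ 2 = A + 2 * S + B.
  rewrite /A /B /S mulr_sumr -!big_split /=; apply: eq_bigr => i _.
  rewrite mxE; ring.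
have leS : S <= Num.sqrt A * Num.sqrt B.
  rewrite -sqrtrM // (le_trans (ler_norm S)) // -(sqrtr_sqr S).
  by rewrite ler_sqrt ?mulr_ge0 // cauchy_schwarz_sum.
have sum_ge0 : 0 <= Num.sqrt A + Num.sqrt B by rewrite addr_ge0 // sqrtr_ge0.
rewrite -(ger0_norm sum_ge0) -sqrtr_sqr ler_sqrt ?sqr_ge0 //.
move: leS; clearbody A B S => leS.
rewrite sqrrD !sqr_sqrtr // -mulr_natl.
by rewrite lerD2r lerD2l mulr1 mulr_natl lerMn2r leS orbT.
Qed.

Lemma nbhs_enorm_lt (y : 'rV[R]_k) (d : R) :
  0 < d -> nbhs y [set v | enorm (y - v) < d].
Proof.
move=> d0; set e := d / k.+1%:R.
have k0 : 0 < k.+1%:R :> R by rewrite ltr0n.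
have e0 : 0 < e by rewrite divr_gt0.
apply/nbhs_ballP; exists e => // v /= [_ ball_v].
have lt_e i : `|(y - v) ord0 i| < e by rewrite !mxE; exact: ball_v ord0 i.
(* each of the k squares is below e^2, and k e^2 < (k+1)^2 e^2 = d^2 *)
have le_sum : \sum_i (y - v) ord0 i ^+ 2 <= k%:R * e ^+ 2.
  rewrite mulr_natl -[X in _ <= _ *+ X](card_ord k) -sumr_const.
  apply: ler_sum => i _.
  by have := lt_e i; rewrite ltr_norml => /andP[]; nra.
have ed : e * k.+1%:R = d by rewrite /e divfK // gt_eqF.
have lt_sq : k%:R * e ^+ 2 < d ^+ 2.
  move: ed; clearbody e => ed.
  rewrite -ed exprMn [_ * e ^+ 2]mulrC ltr_pM2l ?exprn_gt0 //.
  by rewrite -natrX ltr_nat expnS expn1; nia.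
rewrite /enorm -(ger0_norm (ltW d0)) -sqrtr_sqr.
apply: le_lt_trans (_ : Num.sqrt (k%:R * e ^+ 2) < _).
  by rewrite ler_sqrt // mulr_ge0 // ?sqr_ge0.
by rewrite ltr_sqrt // exprn_gt0.
Qed.

End euclidean_norm.

Section distance_to_cone.
Context {R : realType} {k : nat} {C : set 'rV[R]_k}.
Hypothesis C_neq0 : C !=set0.
Hypothesis C_addr : forall c d, C c -> C d -> C (c + d).

Lemma edist_le_enorm (y c : 'rV[R]_k) : C c -> Defs.edist y C <= enorm (y - c).
Proof.
move=> Cc; apply: ge_inf; last by exists c.
by exists 0 => _ [c' _ <-]; exact: enorm_ge0.
Qed.

Lemma le_edist (y : 'rV[R]_k) (a : R) :
  (forall c, C c -> a <= enorm (y - c)) -> a <= Defs.edist y C.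
Proof.
case: C_neq0 => c0 Cc0 lb.
apply: lb_le_inf; first by exists (enorm (y - c0)), c0.
by move=> _ [c Cc <-]; exact: lb.
Qed.

Lemma edist_le_enormD (y v : 'rV[R]_k) :
  Defs.edist y C <= enorm (y - v) + Defs.edist v C.
Proof.
rewrite -lerBlDl; apply: le_edist => c Cc; rewrite lerBlDl.
apply: le_trans (edist_le_enorm y c Cc) _.
suff -> : y - c = (y - v) + (v - c) by exact: enormD.
by rewrite addrA subrK.
Qed.

Lemma edist_le_subr (v c : 'rV[R]_k) :
  C c -> Defs.edist v C <= Defs.edist (v - c) C.
Proof.
move=> Cc; apply: le_edist => c' Cc'.
by rewrite -addrA -opprD edist_le_enorm //; exact: C_addr.
Qed.

Lemma edist_Cusc_lsc_at {X : topologicalType} (g : X -> 'rV[R]_k) (x0 : X)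
    (a : R) :
  C_usc_at C g x0 -> a < Defs.edist (g x0) C ->
  exists2 U, nbhs x0 U & forall x, U x -> a < Defs.edist (g x) C.
Proof.
move=> g_usc lt_a; have d0 : 0 < Defs.edist (g x0) C - a by rewrite subr_gt0.
have [U U_x0 near_V] := g_usc _ (nbhs_enorm_lt (g x0) _ d0).
exists U => // x /near_V [v /= lt_v [c Cc ->]].
have := edist_le_enormD (g x0) v; have := edist_le_subr v c Cc; lra.
Qed.

End distance_to_cone.

Lemma setvalued_lsc_fst {X Y Z : topologicalType} (K : X -> set Z) :
  setvalued_lsc K -> setvalued_lsc (fun q : X * Y => K q.1).
Proof.
move=> K_lsc [x0 y0] V oV KV; have [U U_x0 KUV] := K_lsc x0 V oV KV.
exists (U `*` setT); last by move=> [x y] [/KUV].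
by exists (U, setT) => //=; split => //; exact: filterT.
Qed.

Lemma ereal_sup_lsc {X Y : topologicalType} {R : realType}
    (K : X -> set Y) (h : X -> Y -> R) :
  setvalued_lsc K ->
  (forall x0 y0 a, a < h x0 y0 ->
     exists2 W, nbhs (x0, y0) W & forall w, W w -> a < h w.1 w.2) ->
  lower_semicontinuous (fun x => ereal_sup [set (h x y)%:E | y in K x]).
Proof.
move=> K_lsc h_lsc x0 a /ereal_sup_gt[_ [y0 Ky0 <-]]; rewrite lte_fin => lt_a.
have [W [[A B] /= [A_x0 B_y0] AB_W] W_h] := h_lsc _ _ _ lt_a.
have [Bo [Bo_open Bo_y0 BoB]] : exists Bo, [/\ open Bo, Bo y0 & Bo `<=` B].
  by move: B_y0; rewrite nbhsE => -[Bo [Bo_open Bo_y0] BoB]; exists Bo.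
have [U U_x0 KUBo] := K_lsc x0 Bo Bo_open (ex_intro _ y0 (conj Ky0 Bo_y0)).
exists (A `&` U); first exact: filterI.
move=> x [Ax Ux]; have [y [Ky Boy]] := KUBo x Ux.
apply: lt_le_trans (ereal_sup_ubound _); last by exists y.
by rewrite lte_fin; apply: (W_h (x, y)); apply: AB_W; split => //; exact: BoB.
Qed.

Theorem mainTheorem1 (R : realType) (p n m : nat)
  (C : set 'rV[R]_m)
  (K : 'rV[R]_p -> set 'rV[R]_n)
  (f : 'rV[R]_p * 'rV[R]_n * 'rV[R]_n -> 'rV[R]_m)
  (hC : nontrivial_closed_convex_pointed_cone C)
  (hKgraph : closed (graph K))
  (hKne : forall xi, K xi !=set0)
  (hKlsc : setvalued_lsc K)
  (hf : C_usc C f) :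
  lower_semicontinuous (nu K f C).
Proof.
case: hC => C0 [_ [C_addr _]].
have -> : nu K f C =
    (fun q => ereal_sup [set (Defs.edist (f (q, z)) C)%:E | z in K q.1]).
  by apply/funext => -[].
apply: ereal_sup_lsc; first exact: setvalued_lsc_fst.
move=> q z a lt_a.
have [W W_qz W_lt] :=
  edist_Cusc_lsc_at (ex_intro _ 0 C0) C_addr _ _ _ (hf (q, z)) lt_a.
by exists W => // -[q' z'] /W_lt.
Qed.
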